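(* Let $u:[0,\infty)\to\mathbb R$ be continuous and let $(x_1,x_2)$ be a solution of the age-structured predator–prey system $$\partial_t x_1+\partial_a x_1=-x_1\Big[\mu_1(a)+u(t)+\int_0^A g_1(\alpha)x_2(\alpha,t)d\alpha\Big],\quad \partial_t x_2+\partial_a x_2=-x_2\Big[\mu_2(a)+u(t)+\frac{1}{\int_0^A g_2(\alpha)x_1(\alpha,t)d\alpha}\Big],$$ $x_i(0,t)=\int_0^A k_i(a)x_i(a,t)da$, with $x_i(\cdot,t)\in\mathcal F_i$ for all $t\ge0$ and initial data $x_i(\cdot,0)=x_{i,0}\in\mathcal F_i$. Define $\eta_i(t)=\ln\Pi_i[x_i(\cdot,t)]$. Then there are functions $\psi_i:[-A,\infty)\to(-1,\infty)$ such that $$\psi_i(t-a)=\frac{x_i(a,t)}{x_i^*(a)\,\Pi_i[x_i(\cdot,t)]}-1\quad\text{for all }t\ge0,\ a\in[0,A],$$ so that $x_i(a,t)=x_i^*(a)e^{\eta_i(t)}(1+\psi_i(t-a))$, and $(\eta,\psi)$ satisfy $$\dot\eta_1(t)=\zeta_1-u(t)-e^{\eta_2(t)}\int_0^A g_1(a)x_2^*(a)(1+\psi_2(t-a))\,da,$$ $$\dot\eta_2(t)=\zeta_2-u(t)-\frac{e^{-\eta_1(t)}}{\int_0^A g_2(a)x_1^*(a)(1+\psi_1(t-a))\,da},$$ $$\psi_i(t)=\int_0^A\tilde k_i(a)\psi_i(t-a)\,da\quad(t\ge0),$$ with $\eta_i(0)=\ln\Pi_i[x_{i,0}]$ and $\psi_i(-a)=\frac{x_{i,0}(a)}{x_i^*(a)\Pi_i[x_{i,0}]}-1$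 for $a\in[0,A]$.
   Context: $A>0$; for $i=1,2$, $\mu_i,k_i,g_i:[0,A]\to[0,\infty)$ are (piecewise continuous) with positive integrals over $[0,A]$. $\zeta_i\in\mathbb R$ is the unique real number with $\int_0^A k_i(a)e^{-\int_0^a(\mu_i(s)+\zeta_i)ds}da=1$, and $\tilde k_i(a)=k_i(a)e^{-\int_0^a(\mu_i(s)+\zeta_i)ds}$. $x_i^*(a)=x_i^*(0)e^{-\int_0^a(\zeta_i+\mu_i(s))ds}$ with some constant $x_i^*(0)>0$ (the equilibrium profiles). $\mathcal F_i$ is the set of functions $\xi\in PC^1([0,A];(0,\infty))$ with $\xi(0)=\int_0^A k_i(a)\xi(a)da$, where $PC^1$ denotes continuous functions that are continuously differentiable except at finitely many points where one-sided limits of the derivative exist and are finite. The functionals are $\Pi_i[\xi]=\frac{\int_0^A\pi_{0,i}(a)\xi(a)da}{\int_0^A a\,k_i(a)x_i^*(a)da}$ with $\pi_{0,i}(a)=\int_a^A k_i(s)e^{\int_s^a(\zeta_i+\mu_i(l))dl}ds$. *)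

From Stdlib Require Import Reals.
From Coquelicot Require Import Coquelicot.
Open Scope R_scope.

Definition cont_on_cc (A : R) (f : R -> R) : Prop :=
  forall x, 0 <= x <= A ->
    filterlim f (within (fun y => 0 <= y <= A) (locally x)) (locally (f x)).

Definition partition (A : R) (p : nat -> R) (n : nat) : Prop :=
  p O = 0 /\ p n = A /\ forall i, (i < n)%nat -> p i < p (S i).

Definition PC (A : R) (f : R -> R) : Prop :=
  exists (p : nat -> R) (n : nat), partition A p n /\
    forall i, (i < n)%nat ->
      (forall x, p i < x < p (S i) -> continuous f x) /\
      (exists l, filterlim f (at_right (p i)) (locally l)) /\
      (exists l, filterlim f (at_left (p (S i))) (locally l)).

Definition PC1 (A : R) (f : R -> R) : Prop :=
  cont_on_cc A f /\
  exists (p : nat -> R) (n : nat), partition A p n /\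
    forall i, (i < n)%nat ->
      (forall x, p i < x < p (S i) -> ex_derive f x /\ continuous (Derive f) x) /\
      (exists l, filterlim (Derive f) (at_right (p i)) (locally l)) /\
      (exists l, filterlim (Derive f) (at_left (p (S i))) (locally l)).

Definition admissible (A : R) (f : R -> R) : Prop :=
  PC A f /\ (forall a, 0 <= a <= A -> 0 <= f a) /\ 0 < RInt f 0 A.

Definition is_zeta (A : R) (mu k : R -> R) (zeta : R) : Prop :=
  RInt (fun a => k a * exp (- RInt (fun s => mu s + zeta) 0 a)) 0 A = 1.

Definition ktilde (mu k : R -> R) (zeta : R) (a : R) : R :=
  k a * exp (- RInt (fun s => mu s + zeta) 0 a).

Definition xstar (mu : R -> R) (zeta c : R) (a : R) : R :=
  c * exp (- RInt (fun s => zeta + mu s) 0 a).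

Definition in_F (A : R) (k : R -> R) (xi : R -> R) : Prop :=
  PC1 A xi /\ (forall a, 0 <= a <= A -> 0 < xi a) /\
  xi 0 = RInt (fun a => k a * xi a) 0 A.

Definition pi0 (A : R) (mu k : R -> R) (zeta : R) (a : R) : R :=
  RInt (fun s => k s * exp (RInt (fun l => zeta + mu l) s a)) a A.

Definition Pi (A : R) (mu k : R -> R) (zeta c : R) (xi : R -> R) : R :=
  RInt (fun a => pi0 A mu k zeta a * xi a) 0 A /
  RInt (fun a => a * k a * xstar mu zeta c a) 0 A.

(* A solution of  d_t x + d_a x = - x [mu(a) + u(t) + F(t)]  in the
   characteristic (integrated along characteristics) sense. *)
Definition char_sol (A : R) (mu u F : R -> R) (x : R -> R -> R) : Prop :=
  forall a t s, 0 <= a -> 0 <= t -> 0 <= s -> a + s <= A ->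
    x (a + s) (t + s) =
      x a t * exp (- RInt (fun r => mu (a + r) + u (t + r) + F (t + r)) 0 s).

Definition cont_strip (A : R) (x : R -> R -> R) : Prop :=
  forall a t, 0 <= a <= A -> 0 <= t ->
    filterlim (fun p : R * R => x (fst p) (snd p))
      (within (fun p : R * R => 0 <= fst p <= A /\ 0 <= snd p) (locally (a, t)))
      (locally (x a t)).

Definition deriv_nonneg (f : R -> R) (t v : R) : Prop :=
  filterlim (fun s => (f s - f t) / (s - t))
    (within (fun s => 0 <= s /\ s <> t) (locally t)) (locally v).

Definition is_solution (A : R) (mu1 mu2 k1 k2 g1 g2 u : R -> R)
  (x10 x20 : R -> R) (x1 x2 : R -> R -> R) : Prop :=
  cont_strip A x1 /\ cont_strip A x2 /\
  (forall t, 0 <= t -> in_F A k1 (fun a => x1 a t) /\ in_F A k2 (fun a => x2 a t)) /\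
  (forall t, 0 <= t -> x1 0 t = RInt (fun a => k1 a * x1 a t) 0 A /\
                       x2 0 t = RInt (fun a => k2 a * x2 a t) 0 A) /\
  (forall a, 0 <= a <= A -> x1 a 0 = x10 a /\ x2 a 0 = x20 a) /\
  char_sol A mu1 u (fun t => RInt (fun al => g1 al * x2 al t) 0 A) x1 /\
  char_sol A mu2 u (fun t => / RInt (fun al => g2 al * x1 al t) 0 A) x2.

From Stdlib Require Import Reals Lra Lia Classical ClassicalEpsilon.
From Coquelicot Require Import Coquelicot.
Open Scope R_scope.

(* Along a characteristic t - a = s the equation for x is linear, so
   x(a,t) exp(I(a) - zeta t + int_0^t (u + F)), with I(a) = int_0^a (zeta + mu),
   is constant there; call its value phi(s).  The boundary condition becomes the
   renewal equation phi(t) = int_0^A ktilde(a) phi(t - a) da for t >= 0.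
   With K(a) = int_a^A ktilde, the numerator of Pi[x(.,t)] equals
   exp(zeta t - int_0^t (u + F)) L(t), where L(t) = int_0^A K(a) phi(t - a) da.
   Integrating by parts, L(t) = Phi(t) - int_0^A ktilde(a) Phi(t - a) da for a
   primitive Phi of phi, whose derivative vanishes by the renewal equation; so
   Pi[x(.,t)] = Lam exp(zeta t - int_0^t (u + F)).  This gives the equation for
   eta = ln Pi, and psi, an affine function of phi, inherits the renewal
   equation because int_0^A ktilde = 1. *)

(* Coquelicot states these for an abstract normed module; the [R -> R]
   instances below rewrite directly with [*], [+] and [-]. *)
Lemma RInt_scal_R (f : R -> R) a b l :
  ex_RInt f a b -> RInt (fun x => l * f x) a b = l * RInt f a b.
Proof. exact (RInt_scal f a b l). Qed.

Lemma ex_RInt_scal_R (f : R -> R) a b l :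
  ex_RInt f a b -> ex_RInt (fun x => l * f x) a b.
Proof. exact (ex_RInt_scal f a b l). Qed.

Lemma ex_RInt_minus_R (f g : R -> R) a b : ex_RInt f a b -> ex_RInt g a b ->
  ex_RInt (fun x => f x - g x) a b.
Proof. exact (ex_RInt_minus f g a b). Qed.

Lemma RInt_plus_R (f g : R -> R) a b : ex_RInt f a b -> ex_RInt g a b ->
  RInt (fun x => f x + g x) a b = RInt f a b + RInt g a b.
Proof. exact (RInt_plus f g a b). Qed.

Lemma ex_RInt_plus_R (f g : R -> R) a b : ex_RInt f a b -> ex_RInt g a b ->
  ex_RInt (fun x => f x + g x) a b.
Proof. exact (ex_RInt_plus f g a b). Qed.

Lemma RInt_minus_R (f g : R -> R) a b : ex_RInt f a b -> ex_RInt g a b ->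
  RInt (fun x => f x - g x) a b = RInt f a b - RInt g a b.
Proof. exact (RInt_minus f g a b). Qed.

Lemma RInt_Chasles_R (f : R -> R) a b c : ex_RInt f a b -> ex_RInt f b c ->
  RInt f a b + RInt f b c = RInt f a c.
Proof. exact (RInt_Chasles f a b c). Qed.

Lemma RInt_ext_R (f g : R -> R) a b :
  (forall x, Rmin a b < x < Rmax a b -> f x = g x) -> RInt f a b = RInt g a b.
Proof. exact (RInt_ext f g a b). Qed.

Lemma ex_RInt_ext_R (f g : R -> R) a b :
  (forall x, Rmin a b < x < Rmax a b -> f x = g x) -> ex_RInt f a b -> ex_RInt g a b.
Proof. exact (ex_RInt_ext f g a b). Qed.

Lemma ex_RInt_continuous_R (f : R -> R) a b :
  (forall x, continuity_pt f x) -> ex_RInt f a b.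
Proof.
intros Hf. apply (ex_RInt_continuous (V := R_CompleteNormedModule)).
intros z _. apply continuity_pt_filterlim, Hf.
Qed.

Lemma RInt_translate (f : R -> R) v s : ex_RInt f v (v + s) ->
  RInt (fun r => f (v + r)) 0 s = RInt f v (v + s).
Proof.
intros H.
assert (E : RInt f v (v + s) = RInt f (1 * 0 + v) (1 * s + v)) by (f_equal; ring).
rewrite E, <- RInt_comp_lin.
- apply RInt_ext_R. intros r _. change (f (v + r) = 1 * f (1 * r + v)).
  rewrite Rmult_1_l, Rmult_1_l, Rplus_comm. reflexivity.
- replace (1 * 0 + v) with v by ring. replace (1 * s + v) with (v + s) by ring. exact H.
Qed.

Lemma ex_RInt_translate (f : R -> R) v s : ex_RInt f v (v + s) ->
  ex_RInt (fun r => f (v + r)) 0 s.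
Proof.
intros H. apply ex_RInt_ext_R with (fun r => 1 * f (1 * r + v)).
- intros r _. rewrite Rmult_1_l, Rmult_1_l, Rplus_comm. reflexivity.
- apply (ex_RInt_comp_lin f 1 v 0 s).
  replace (1 * 0 + v) with v by ring. replace (1 * s + v) with (v + s) by ring. exact H.
Qed.

Lemma locally_open_interval p q x : p < x < q -> locally x (fun y => p < y < q).
Proof. intros Hx. apply (locally_interval _ x p q); simpl; tauto. Qed.

Definition clamp (p q y : R) : R := Rmax p (Rmin q y).

Lemma clamp_range p q y : p <= q -> p <= clamp p q y <= q.
Proof. intros. unfold clamp, Rmax, Rmin. repeat destruct Rle_dec; lra. Qed.

Lemma clamp_id p q y : p <= y <= q -> clamp p q y = y.
Proof. intros. unfold clamp, Rmax, Rmin. repeat destruct Rle_dec; lra. Qed.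

Lemma clamp_lipschitz p q y z : p <= q -> Rabs (clamp p q y - clamp p q z) <= Rabs (y - z).
Proof.
intros. unfold clamp, Rmax, Rmin.
repeat destruct Rle_dec; unfold Rabs; repeat destruct Rcase_abs; lra.
Qed.

Lemma Rmax_0_lipschitz y z : Rabs (Rmax 0 y - Rmax 0 z) <= Rabs (y - z).
Proof. unfold Rmax. repeat destruct Rle_dec; unfold Rabs; repeat destruct Rcase_abs; lra. Qed.

Lemma lipschitz_continuity_pt (f : R -> R) M x :
  (forall y z, Rabs (f y - f z) <= M * Rabs (y - z)) -> continuity_pt f x.
Proof.
intros Hf eps Heps.
assert (HM : 0 < Rabs M + 1) by (pose proof (Rabs_pos M); lra).
exists (eps / (Rabs M + 1)); split; [apply Rdiv_lt_0_compat; lra|].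
intros y [_ Hy]; simpl in *; unfold R_dist in *.
apply Rle_lt_trans with ((Rabs M + 1) * Rabs (y - x)).
- eapply Rle_trans; [apply Hf|]. apply Rmult_le_compat_r; [apply Rabs_pos|].
  pose proof (RRle_abs M); lra.
- apply Rlt_le_trans with ((Rabs M + 1) * (eps / (Rabs M + 1))).
  + apply Rmult_lt_compat_l; lra.
  + right; field; lra.
Qed.

Lemma continuity_pt_comp_retraction (S : R -> Prop) (r f : R -> R) y :
  (forall z, S (r z)) -> (forall z w, Rabs (r z - r w) <= Rabs (z - w)) ->
  filterlim f (within S (locally (r y))) (locally (f (r y))) ->
  continuity_pt (fun z => f (r z)) y.
Proof.
intros HS Hr Hf. apply continuity_pt_filterlim.
apply (filterlim_comp _ _ _ r f _ (within S (locally (r y)))); [|exact Hf].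
intros P [d Hd]. exists d. intros z Hz. apply Hd; [|apply HS].
exact (Rle_lt_trans _ _ _ (Hr z y) Hz).
Qed.

Lemma cont_on_cc_clamp A f y : 0 <= A -> cont_on_cc A f ->
  continuity_pt (fun z => f (clamp 0 A z)) y.
Proof.
intros HA Hf. apply (continuity_pt_comp_retraction (fun z => 0 <= z <= A)).
- intros z. apply clamp_range, HA.
- intros z w. apply clamp_lipschitz, HA.
- apply Hf, clamp_range, HA.
Qed.

Lemma ex_RInt_subinterval (h : R -> R) p q a b :
  ex_RInt h p q -> p <= a <= q -> p <= b <= q -> ex_RInt h a b.
Proof.
intros H Ha Hb.
assert (Hs : forall a b, p <= a <= b -> b <= q -> ex_RInt h a b).
{ intros a' b' H1 H2. apply (ex_RInt_Chasles_2 (V := R_CompleteNormedModule)) with p; [lra|].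
  apply (ex_RInt_Chasles_1 (V := R_CompleteNormedModule)) with q; [lra|exact H]. }
destruct (Rle_dec a b); [apply Hs; lra|apply ex_RInt_swap, Hs; lra].
Qed.

Lemma ex_RInt_open_piece (h : R -> R) p q l1 l2 : p < q ->
  (forall x, p < x < q -> continuous h x) ->
  filterlim h (at_right p) (locally l1) -> filterlim h (at_left q) (locally l2) ->
  ex_RInt h p q.
Proof.
intros Hpq Hc H1 H2.
destruct (C0_extension_lt h l1 l2 p q Hpq Hc H1 H2) as [g [Hg [Egh _]]].
apply ex_RInt_ext with g.
- intros x Hx. rewrite Rmin_left, Rmax_right in Hx by lra. apply Egh, Hx.
- apply (ex_RInt_continuous (V := R_CompleteNormedModule)). intros z _. apply Hg.
Qed.

Lemma PC_ex_RInt A (h : R -> R) : PC A h -> ex_RInt h 0 A.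
Proof.
intros [p [n [[H0 [Hn Hinc]] Hp]]].
assert (Hj : forall j, (j <= n)%nat -> ex_RInt h 0 (p j)).
{ induction j as [|j IH]; intros Hj; [rewrite H0; apply ex_RInt_point|].
  apply ex_RInt_Chasles with (p j); [apply IH; lia|].
  destruct (Hp j) as [Hc [[l1 H1] [l2 H2]]]; [lia|].
  apply (ex_RInt_open_piece h _ _ l1 l2); auto; apply Hinc; lia. }
rewrite <- Hn. apply Hj; lia.
Qed.

Lemma PC_mult_continuous A h g :
  PC A h -> (forall x, continuity_pt g x) -> PC A (fun a => h a * g a).
Proof.
intros [p [n [Hpart Hp]]] Hg. exists p, n. split; [exact Hpart|].
assert (Hlim : forall F l z, Filter F -> filter_le F (locally z) ->
  filterlim h F (locally l) -> filterlim (fun a => h a * g a) F (locally (l * g z))).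
{ intros F l z FF Hz Hh.
  apply (filterlim_comp_2 (G := locally l) (H := locally (g z)) h g Rmult Hh).
  - eapply filterlim_filter_le_1; [exact Hz|]. apply continuity_pt_filterlim, Hg.
  - apply (filterlim_mult (K := R_AbsRing)). }
intros i Hi. destruct (Hp i Hi) as [Hc [[l1 H1] [l2 H2]]]. split; [|split].
- intros x Hx. apply (continuous_mult h g); [apply Hc, Hx|].
  apply continuity_pt_filterlim, Hg.
- exists (l1 * g (p i)). apply Hlim; [exact _|apply filter_le_within|exact H1].
- exists (l2 * g (p (S i))). apply Hlim; [exact _|apply filter_le_within|exact H2].
Qed.

Lemma PC_cont_on_cc_ex_RInt A g f : 0 <= A -> PC A g -> cont_on_cc A f ->
  ex_RInt (fun a => g a * f a) 0 A.
Proof.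
intros HA Hg Hf. apply ex_RInt_ext with (fun a => g a * f (clamp 0 A a)).
- intros x Hx. rewrite Rmin_left, Rmax_right in Hx by lra. rewrite clamp_id; auto; lra.
- apply PC_ex_RInt, PC_mult_continuous; auto. intros. apply cont_on_cc_clamp; auto.
Qed.

Lemma abs_RInt_le_const_abs (f : R -> R) a b M : ex_RInt f a b ->
  (forall t, Rmin a b <= t <= Rmax a b -> Rabs (f t) <= M) ->
  Rabs (RInt f a b) <= M * Rabs (b - a).
Proof.
intros Hf HM. destruct (Rle_dec a b) as [Hab|Hab].
- rewrite Rmin_left, Rmax_right in HM by lra. rewrite (Rabs_right (b - a)) by lra.
  rewrite Rmult_comm. apply abs_RInt_le_const; auto.
- rewrite Rmin_right, Rmax_left in HM by lra.
  replace (RInt f a b) with (- RInt f b a) by exact (opp_RInt_swap f b a (ex_RInt_swap _ _ _ Hf)).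
  rewrite Rabs_Ropp, (Rabs_left (b - a)) by lra.
  replace (M * - (b - a)) with ((a - b) * M) by ring.
  apply abs_RInt_le_const; [lra|apply ex_RInt_swap, Hf|exact HM].
Qed.

Lemma abs_RInt_mult_le (h q : R -> R) a b e : a <= b ->
  ex_RInt h a b -> ex_RInt (fun x => h x * q x) a b ->
  (forall x, a < x < b -> 0 <= h x) -> (forall x, a < x < b -> Rabs (q x) <= e) ->
  Rabs (RInt (fun x => h x * q x) a b) <= e * RInt h a b.
Proof.
intros Hab Ih Ihq Hh Hq.
assert (Hs : forall s, ex_RInt (fun x => s * h x) a b) by (intros s; apply ex_RInt_scal_R, Ih).
apply Rabs_le; split; [replace (- (e * RInt h a b)) with (- e * RInt h a b) by ring|];
  rewrite <- RInt_scal_R by exact Ih; apply RInt_le; auto;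
  intros x Hx; pose proof (Hh x Hx); destruct (proj1 (Rabs_le_between _ _) (Hq x Hx)); nra.
Qed.

Lemma RInt_clamp_continuous (f : R -> R) p q y : p <= q -> ex_RInt f p q ->
  continuity_pt (fun z => RInt f p (clamp p q z)) y.
Proof.
intros Hpq Hf. destruct (ex_RInt_ub f p q Hf) as [M HM].
rewrite Rmin_left, Rmax_right in HM by lra.
assert (HM0 : 0 <= M) by (apply Rle_trans with (Rabs (f p)); [apply Rabs_pos|apply HM; lra]).
apply lipschitz_continuity_pt with M. intros z w.
pose proof (clamp_range p q z Hpq). pose proof (clamp_range p q w Hpq).
rewrite <- (RInt_Chasles_R f p (clamp p q w) (clamp p q z))
  by (apply (ex_RInt_subinterval f p q); auto; lra).
rewrite Rplus_comm; unfold Rminus; rewrite Rplus_assoc, Rplus_opp_r, Rplus_0_r.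
eapply Rle_trans.
- apply abs_RInt_le_const_abs; [apply (ex_RInt_subinterval f p q); auto|].
  intros t Ht. apply HM. split.
  + eapply Rle_trans; [|apply Ht]. apply Rmin_glb; lra.
  + eapply Rle_trans; [apply Ht|]. apply Rmax_lub; lra.
- apply Rmult_le_compat_l; [exact HM0|apply clamp_lipschitz, Hpq].
Qed.

(* The clamped primitive makes [F - RInt f p] continuous on all of [R],
   so the mean value theorem applies on the closed interval. *)
Lemma RInt_derive_open_interval (F f : R -> R) p q : p < q -> ex_RInt f p q ->
  (forall y, continuity_pt F y) ->
  (forall x, p < x < q -> is_derive F x (f x) /\ continuous f x) ->
  F q - F p = RInt f p q.
Proof.
intros Hpq Hf HF Hd.
set (H := fun y => F y - RInt f p (clamp p q y)).
destruct (MVT_gen H p q (fun _ => 0)) as [c [_ Hc]].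
- intros x Hx. rewrite Rmin_left, Rmax_right in Hx by lra.
  destruct (Hd x Hx) as [HdF Hcf]. replace 0 with (f x - f x) by ring.
  apply is_derive_ext_loc with (fun y => F y - RInt f p y).
  + apply (filter_imp (fun y => p < y < q)); [|apply locally_open_interval, Hx].
    intros y Hy. unfold H. rewrite clamp_id by lra. reflexivity.
  + apply (is_derive_minus F (RInt f p)); [exact HdF|].
    apply (is_derive_RInt f (RInt f p) p x); [|exact Hcf].
    apply (filter_imp (fun y => p < y < q)); [|apply locally_open_interval, Hx].
    intros y Hy. apply (RInt_correct (V := R_CompleteNormedModule)).
    apply (ex_RInt_subinterval f p q); auto; lra.
- intros x _. apply continuity_pt_minus; [apply HF|apply RInt_clamp_continuous; auto; lra].
- unfold H in Hc. rewrite !clamp_id, RInt_point in Hc by lra.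
  change (zero : R) with 0 in Hc. lra.
Qed.

Lemma partition_le A p n : partition A p n ->
  forall i j, (i <= j <= n)%nat -> p i <= p j.
Proof.
intros [_ [_ Hinc]] i j. induction j as [|j IH]; intros Hij.
- replace i with 0%nat by lia. lra.
- destruct (Nat.eq_dec i (S j)) as [->|Hne]; [lra|].
  apply Rle_trans with (p j); [apply IH; lia|left; apply Hinc; lia].
Qed.

Lemma partition_range A p n : partition A p n -> forall i, (i <= n)%nat -> 0 <= p i <= A.
Proof.
intros Hp i Hi. pose proof Hp as [H0 [Hn _]]. rewrite <- H0, <- Hn.
split; apply (partition_le A p n Hp); lia.
Qed.

Lemma RInt_derive_partition A p n (F f : R -> R) : partition A p n ->
  (forall y, continuity_pt F y) -> ex_RInt f 0 A ->
  (forall i, (i < n)%nat -> forall x, p i < x < p (S i) ->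
     is_derive F x (f x) /\ continuous f x) ->
  F A - F 0 = RInt f 0 A.
Proof.
intros Hp HF Hf Hd. pose proof Hp as [H0 [Hn Hinc]].
assert (Hj : forall j, (j <= n)%nat -> F (p j) - F 0 = RInt f 0 (p j)).
{ induction j as [|j IH]; intros Hj.
  - rewrite H0, RInt_point, Rminus_diag. reflexivity.
  - pose proof (partition_range A p n Hp j ltac:(lia)).
    pose proof (partition_range A p n Hp (S j) Hj).
    rewrite <- (RInt_Chasles_R f 0 (p j) (p (S j)))
      by (apply (ex_RInt_subinterval f 0 A); auto; lra).
    rewrite <- IH by lia.
    rewrite <- (RInt_derive_open_interval F f (p j) (p (S j))); [ring| | |exact HF|].
    + apply Hinc; lia.
    + apply (ex_RInt_subinterval f 0 A); auto.
    + apply Hd; lia. }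
rewrite <- Hn. apply Hj; lia.
Qed.

Lemma RInt_gt_0_left_end (f : R -> R) A : 0 < A -> (forall x, continuity_pt f x) ->
  (forall a, 0 <= a <= A -> 0 <= f a) -> 0 < f 0 -> 0 < RInt f 0 A.
Proof.
intros HA Hc Hf H0.
destruct (Hc 0 (f 0) H0) as [d [Hd Hnear]]; simpl in Hnear; unfold R_dist in Hnear.
set (d' := Rmin (d / 2) A).
assert (Hd' : 0 < d' <= A) by (split; [apply Rmin_glb_lt; lra|apply Rmin_r]).
assert (Hd2 : d' <= d / 2) by apply Rmin_l.
rewrite <- (RInt_Chasles_R f 0 d' A) by (apply ex_RInt_continuous_R, Hc).
assert (0 <= RInt f d' A).
{ apply RInt_ge_0; [lra|apply ex_RInt_continuous_R, Hc|intros; apply Hf; lra]. }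
assert (0 < RInt f 0 d').
{ apply RInt_gt_0; [lra| |intros; apply continuity_pt_filterlim, Hc].
  intros x Hx. assert (Hx' : Rabs (f x - f 0) < f 0).
  { apply Hnear. split; [split; [exact I|lra]|]. rewrite Rminus_0_r, Rabs_right; lra. }
  apply Rabs_def2 in Hx'. lra. }
lra.
Qed.

Lemma RInt_mult_gt_0 A g f : 0 < A -> PC A g -> (forall a, 0 <= a <= A -> 0 <= g a) ->
  0 < RInt g 0 A -> cont_on_cc A f -> (forall a, 0 <= a <= A -> 0 < f a) ->
  0 < RInt (fun a => g a * f a) 0 A.
Proof.
intros HA Hg Hg0 HgI Hf Hf0.
destruct (continuity_ab_min (fun z => f (clamp 0 A z)) 0 A ltac:(lra)
  (fun z _ => cont_on_cc_clamp A f z ltac:(lra) Hf)) as [z [Hmin Hz]].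
pose proof (Hf0 _ (clamp_range 0 A z ltac:(lra))) as Hm.
apply Rlt_le_trans with (f (clamp 0 A z) * RInt g 0 A); [apply Rmult_lt_0_compat; auto|].
rewrite <- RInt_scal_R by (apply PC_ex_RInt, Hg).
apply RInt_le; [lra|apply ex_RInt_scal_R, PC_ex_RInt, Hg|apply PC_cont_on_cc_ex_RInt; auto; lra|].
intros a Ha. specialize (Hmin a ltac:(lra)). rewrite (clamp_id 0 A a) in Hmin by lra.
pose proof (Hg0 a ltac:(lra)). nra.
Qed.

Lemma cont_strip_uniform_in_age A x t : 0 <= A -> cont_strip A x -> 0 <= t ->
  forall eps, 0 < eps -> exists d, 0 < d /\ forall a s, 0 <= a <= A -> 0 <= s ->
    Rabs (s - t) < d -> Rabs (x a s - x a t) < eps.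
Proof.
intros HA Hx Ht eps Heps.
assert (Hloc : forall a, {d : posreal | forall a' s, 0 <= a' <= A -> 0 <= s ->
    Rabs (a' - clamp 0 A a) < d -> Rabs (s - t) < d ->
    Rabs (x a' s - x (clamp 0 A a) t) < eps / 2}).
{ intros a. apply constructive_indefinite_description.
  destruct (proj1 (filterlim_locally _ _) (Hx _ t (clamp_range 0 A a HA) Ht)
    (pos_div_2 (mkposreal eps Heps))) as [d Hd].
  exists d. intros a' s Ha' Hs H1 H2. apply (Hd (a', s)); split; assumption. }
destruct (compactness_value_1d 0 A (fun a => proj1_sig (Hloc a))) as [d Hd].
exists d; split; [apply cond_pos|]. intros a s Ha Hs Hst.
apply NNPP. intros Hn. apply (Hd a Ha). intros [a0 [Ha0 [H1 H2]]]. apply Hn.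
revert H1 H2. destruct (Hloc a0) as [d0 P]. simpl. intros H1 H2.
rewrite clamp_id in P by exact Ha0.
assert (Rabs (x a s - x a0 t) < eps / 2) by (apply P; auto; lra).
assert (Rabs (x a t - x a0 t) < eps / 2).
{ apply P; auto. rewrite Rminus_diag, Rabs_R0. apply cond_pos. }
replace (x a s - x a t) with ((x a s - x a0 t) - (x a t - x a0 t)) by ring.
eapply Rle_lt_trans; [apply Rabs_triang|]. rewrite Rabs_Ropp. lra.
Qed.

Lemma RInt_weighted_continuous_in_time A g x t : 0 <= A -> PC A g ->
  (forall a, 0 <= a <= A -> 0 <= g a) -> cont_strip A x ->
  (forall s, 0 <= s -> cont_on_cc A (fun a => x a s)) -> 0 <= t ->
  filterlim (fun s => RInt (fun a => g a * x a s) 0 A)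
    (within (fun s => 0 <= s) (locally t)) (locally (RInt (fun a => g a * x a t) 0 A)).
Proof.
intros HA Hg Hg0 Hx Hxa Ht. apply filterlim_locally. intros eps.
assert (Ig : ex_RInt g 0 A) by (apply PC_ex_RInt, Hg).
set (S := RInt g 0 A).
assert (HS : 0 <= S) by (apply RInt_ge_0; [exact HA|exact Ig|intros; apply Hg0; lra]).
assert (He : 0 < eps / (S + 1)) by (apply Rdiv_lt_0_compat; [apply cond_pos|lra]).
destruct (cont_strip_uniform_in_age A x t HA Hx Ht _ He) as [d [Hd Hunif]].
exists (mkposreal d Hd). intros s Hs Hs0. change (Rabs (s - t) < d) in Hs.
change (Rabs (RInt (fun a => g a * x a s) 0 A - RInt (fun a => g a * x a t) 0 A) < eps).
rewrite <- RInt_minus_R by (apply PC_cont_on_cc_ex_RInt; auto).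
rewrite (RInt_ext_R _ (fun a => g a * (x a s - x a t))) by (intros; ring).
apply Rle_lt_trans with (eps / (S + 1) * S).
- apply abs_RInt_mult_le; auto.
  + apply ex_RInt_ext_R with (fun a => g a * x a s - g a * x a t); [intros; ring|].
    apply ex_RInt_minus_R; apply PC_cont_on_cc_ex_RInt; auto.
  + intros a Ha. apply Hg0. lra.
  + intros a Ha. left. apply Hunif; auto. lra.
- apply Rlt_le_trans with (eps / (S + 1) * (S + 1)); [apply Rmult_lt_compat_l; lra|].
  right. field. lra.
Qed.

Lemma continuity_pt_reflect (g : R -> R) s y : (forall z, continuity_pt g z) ->
  continuity_pt (fun a => g (s - a)) y.
Proof.
intros Hg. apply (continuity_pt_comp (fun a => s - a) g); [|apply Hg].
apply continuity_pt_minus;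
  [apply continuity_pt_const; intros ? ?; reflexivity|apply continuity_pt_id].
Qed.

Lemma is_derive_RInt_from_0 (f : R -> R) y : (forall x, continuity_pt f x) ->
  is_derive (fun z => RInt f 0 z) y (f y).
Proof.
intros Hc. apply (is_derive_RInt f (fun z => RInt f 0 z) 0 y).
- apply filter_forall. intros z.
  apply (RInt_correct (V := R_CompleteNormedModule)), ex_RInt_continuous_R, Hc.
- apply continuity_pt_filterlim, Hc.
Qed.

Lemma continuity_pt_RInt_0 (f : R -> R) y : (forall x, continuity_pt f x) ->
  continuity_pt (fun z => RInt f 0 z) y.
Proof.
intros Hc. apply derivable_continuous_pt. exists (f y).
apply is_derive_Reals, is_derive_RInt_from_0, Hc.
Qed.

Lemma RInt_difference_quotient_bound (f : R -> R) y h e : (forall x, continuity_pt f x) ->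
  h <> 0 -> (forall s, Rmin y (y + h) <= s <= Rmax y (y + h) -> Rabs (f s - f y) <= e) ->
  Rabs ((RInt f 0 (y + h) - RInt f 0 y) / h - f y) <= e.
Proof.
intros Hc Hh Hb.
assert (If : forall a b, ex_RInt f a b) by (intros; apply ex_RInt_continuous_R, Hc).
rewrite <- (RInt_Chasles_R f 0 y (y + h)) by apply If.
replace ((RInt f 0 y + RInt f y (y + h) - RInt f 0 y) / h - f y)
  with ((RInt f y (y + h) - RInt (fun _ => f y) y (y + h)) / h)
  by (rewrite RInt_const; change (scal (y + h - y) (f y)) with ((y + h - y) * f y);
      field; exact Hh).
rewrite <- RInt_minus_R by (apply If || apply ex_RInt_const).
unfold Rdiv. rewrite Rabs_mult, Rabs_inv.
apply Rle_trans with (e * Rabs h * / Rabs h); [|right; field; apply Rabs_no_R0, Hh].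
apply Rmult_le_compat_r; [left; apply Rinv_0_lt_compat, Rabs_pos_lt, Hh|].
replace h with (y + h - y) at 2 by ring.
apply abs_RInt_le_const_abs; [|exact Hb].
apply ex_RInt_minus_R; [apply If|apply ex_RInt_const].
Qed.

Lemma RInt_convolution_quotient A h (f P : R -> R) t eta : PC A h ->
  (forall z, continuity_pt f z) -> (forall z, continuity_pt P z) -> eta <> 0 ->
  (RInt (fun a => h a * P (t + eta - a)) 0 A - RInt (fun a => h a * P (t - a)) 0 A) / eta
    - RInt (fun a => h a * f (t - a)) 0 A
  = RInt (fun a => h a * ((P (t + eta - a) - P (t - a)) / eta - f (t - a))) 0 A.
Proof.
intros Hh Hf HP Heta.
assert (Ihg : forall g, (forall z, continuity_pt g z) -> ex_RInt (fun a => h a * g a) 0 A)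
  by (intros g Hg; apply PC_ex_RInt, PC_mult_continuous; auto).
assert (I1 := Ihg _ (fun y => continuity_pt_reflect P (t + eta) y HP)).
assert (I0 := Ihg _ (fun y => continuity_pt_reflect P t y HP)).
assert (I2 := Ihg _ (fun y => continuity_pt_reflect f t y Hf)).
rewrite (RInt_ext_R (fun a => h a * ((P (t + eta - a) - P (t - a)) / eta - f (t - a)))
                    (fun a => / eta * (h a * P (t + eta - a)) - / eta * (h a * P (t - a))
                                - h a * f (t - a))).
- rewrite !RInt_minus_R, !RInt_scal_R; auto using ex_RInt_scal_R, ex_RInt_minus_R.
  field. exact Heta.
- intros a _. field. exact Heta.
Qed.

Lemma derivable_pt_lim_convolution A h f t : 0 < A -> PC A h ->
  (forall a, 0 <= a <= A -> 0 <= h a) -> (forall x, continuity_pt f x) ->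
  derivable_pt_lim (fun s => RInt (fun a => h a * RInt f 0 (s - a)) 0 A) t
    (RInt (fun a => h a * f (t - a)) 0 A).
Proof.
intros HA Hh Hh0 Hf eps Heps.
assert (HP : forall z, continuity_pt (fun y => RInt f 0 y) z)
  by (intros; apply continuity_pt_RInt_0, Hf).
assert (Ih : ex_RInt h 0 A) by (apply PC_ex_RInt, Hh).
set (S := RInt h 0 A).
assert (HS : 0 <= S) by (apply RInt_ge_0; [lra|exact Ih|intros; apply Hh0; lra]).
set (e := eps / (2 * (S + 1))).
assert (He : 0 < e) by (apply Rdiv_lt_0_compat; lra).
destruct (Heine f (fun z => t - A - 1 <= z <= t + 1) (compact_P3 _ _) (fun z _ => Hf z)
  (mkposreal e He)) as [d0 Hd0].
assert (Hd : 0 < Rmin d0 1) by (apply Rmin_glb_lt; [apply cond_pos|lra]).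
exists (mkposreal _ Hd). intros eta Heta Hsmall; simpl in Hsmall.
assert (Heta1 : Rabs eta < d0) by (eapply Rlt_le_trans; [exact Hsmall|apply Rmin_l]).
assert (Heta2 : Rabs eta < 1) by (eapply Rlt_le_trans; [exact Hsmall|apply Rmin_r]).
cbv beta. rewrite (RInt_convolution_quotient A h f (fun y => RInt f 0 y)) by assumption.
apply Rle_lt_trans with (e * S).
- apply abs_RInt_mult_le; [lra|exact Ih| |intros; apply Hh0; lra|].
  + apply PC_ex_RInt, PC_mult_continuous; [exact Hh|]. intros y.
    apply continuity_pt_minus; [|apply continuity_pt_reflect, Hf].
    apply continuity_pt_div; [|apply continuity_pt_const; intros ? ?; reflexivity|exact Heta].
    apply continuity_pt_minus; apply continuity_pt_reflect, HP.
  + intros a Ha. replace (t + eta - a) with (t - a + eta) by ring.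
    apply RInt_difference_quotient_bound; [exact Hf|exact Heta|].
    intros s Hs. left.
    assert (Hs' : Rabs (s - (t - a)) <= Rabs eta).
    { clear - Hs. unfold Rmin, Rmax in Hs. destruct Rle_dec in Hs; split_Rabs; lra. }
    apply Hd0; split_Rabs; lra.
- apply Rlt_le_trans with (e * (S + 1)); [apply Rmult_lt_compat_l; lra|].
  unfold e. apply Rle_trans with (eps / 2); [right; field|]; lra.
Qed.

Lemma deriv_nonneg_of_derivable (eta f : R -> R) t l :
  (forall s, 0 <= s -> eta s = f s) -> 0 <= t -> derivable_pt_lim f t l ->
  deriv_nonneg eta t l.
Proof.
intros Ef Ht Df. apply filterlim_locally. intros eps.
destruct (Df eps (cond_pos eps)) as [d Hd].
exists d. intros s Hs [Hs0 Hst].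
change (Rabs ((eta s - eta t) / (s - t) - l) < eps).
rewrite !Ef by assumption.
specialize (Hd (s - t) ltac:(lra) Hs). rewrite Rplus_minus in Hd. exact Hd.
Qed.

Lemma deriv_nonneg_ln_exp_RInt (P G : R -> R) Lam zeta t : 0 < Lam ->
  (forall y, continuity_pt G y) ->
  (forall s, 0 <= s -> P s = Lam * exp (zeta * s - RInt G 0 s)) -> 0 <= t ->
  deriv_nonneg (fun s => ln (P s)) t (zeta - G t).
Proof.
intros HLam HG HP Ht.
apply (deriv_nonneg_of_derivable _ (fun s => ln Lam + (zeta * s - RInt G 0 s))); [|exact Ht|].
- intros s Hs. rewrite HP, ln_mult, ln_exp by (auto using exp_pos). reflexivity.
- replace (zeta - G t) with (0 + (zeta * 1 - G t)) by ring.
  apply derivable_pt_lim_plus; [apply derivable_pt_lim_const|].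
  apply derivable_pt_lim_minus; [apply derivable_pt_lim_scal, derivable_pt_lim_id|].
  apply is_derive_Reals, is_derive_RInt_from_0, HG.
Qed.

Section Species.

Variables (A zeta c : R) (mu k u F G : R -> R) (x : R -> R -> R).
Hypothesis HA : 0 < A.
Hypothesis Hmu : admissible A mu.
Hypothesis Hk : admissible A k.
Hypothesis Hzeta : is_zeta A mu k zeta.
Hypothesis Hx : cont_strip A x.
Hypothesis HxF : forall t, 0 <= t -> in_F A k (fun a => x a t).
Hypothesis Hchar : char_sol A mu u F x.
Hypothesis HG : forall y, continuity_pt G y.
Hypothesis HGuF : forall t, 0 <= t -> G t = u t + F t.
Hypothesis Hc : 0 < c.

(* Clamping the upper bound makes [I] and [Kt] continuous on all of [R]; on
   [0, A] they are the paper's cumulative rate and the tail of [ktilde]. *)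
Let I (a : R) : R := RInt (fun s => zeta + mu s) 0 (clamp 0 A a).
Let kt (a : R) : R := k a * exp (- I a).
Let Kt (a : R) : R := RInt kt (clamp 0 A a) A.

Lemma mu_zeta_ex_RInt : ex_RInt (fun s => zeta + mu s) 0 A.
Proof. apply ex_RInt_plus_R; [apply ex_RInt_const|apply PC_ex_RInt, Hmu]. Qed.

Lemma I_continuous y : continuity_pt I y.
Proof. apply RInt_clamp_continuous; [lra|apply mu_zeta_ex_RInt]. Qed.

Lemma I_minus a b : 0 <= a <= A -> 0 <= b <= A ->
  I b - I a = RInt (fun s => zeta + mu s) a b.
Proof.
intros Ha Hb. unfold I. rewrite !clamp_id by assumption.
rewrite <- (RInt_Chasles_R _ 0 a b); [ring| |];
  apply (ex_RInt_subinterval _ 0 A); auto using mu_zeta_ex_RInt; lra.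
Qed.

Lemma I_0 : I 0 = 0.
Proof. unfold I. rewrite clamp_id by lra. exact (RInt_point 0 _). Qed.

Lemma exp_opp_I_continuous y : continuity_pt (fun a => exp (- I a)) y.
Proof.
apply (continuity_pt_comp (fun a => - I a) exp).
- apply continuity_pt_opp, I_continuous.
- apply derivable_continuous_pt, derivable_pt_exp.
Qed.

Lemma kt_continuity_pt y : continuity_pt k y -> continuity_pt kt y.
Proof. intros Hky. apply continuity_pt_mult; [exact Hky|apply exp_opp_I_continuous]. Qed.

Lemma kt_PC : PC A kt.
Proof. apply PC_mult_continuous; [apply Hk|apply exp_opp_I_continuous]. Qed.

Lemma kt_ex_RInt a b : 0 <= a <= A -> 0 <= b <= A -> ex_RInt kt a b.
Proof. intros. apply (ex_RInt_subinterval kt 0 A); auto. apply PC_ex_RInt, kt_PC. Qed.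

Lemma kt_nonneg a : 0 <= a <= A -> 0 <= kt a.
Proof.
intros Ha. unfold kt. pose proof (exp_pos (- I a)). destruct Hk as [_ [Hk0 _]].
pose proof (Hk0 a Ha). nra.
Qed.

Lemma kt_ktilde a : 0 <= a <= A -> kt a = ktilde mu k zeta a.
Proof.
intros Ha. unfold kt, ktilde, I. rewrite clamp_id by exact Ha. do 3 f_equal.
apply RInt_ext_R. intros. ring.
Qed.

Lemma kt_RInt_1 : RInt kt 0 A = 1.
Proof.
rewrite <- Hzeta. apply RInt_ext_R. intros a Ha.
rewrite Rmin_left, Rmax_right in Ha by lra. apply kt_ktilde. lra.
Qed.

Lemma Kt_continuous y : continuity_pt Kt y.
Proof.
apply continuity_pt_ext with (fun z => RInt kt 0 A - RInt kt 0 (clamp 0 A z)).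
- intros z. unfold Kt. pose proof (clamp_range 0 A z ltac:(lra)).
  rewrite <- (RInt_Chasles_R kt 0 (clamp 0 A z) A) by (apply kt_ex_RInt; lra). ring.
- apply continuity_pt_minus; [apply continuity_pt_const; intros ? ?; reflexivity|].
  apply RInt_clamp_continuous; [lra|apply kt_ex_RInt; lra].
Qed.

Lemma Kt_0 : Kt 0 = 1.
Proof. unfold Kt. rewrite clamp_id by lra. apply kt_RInt_1. Qed.

Lemma Kt_A : Kt A = 0.
Proof. unfold Kt. rewrite clamp_id by lra. exact (RInt_point A _). Qed.

Lemma Kt_nonneg y : 0 <= Kt y.
Proof.
unfold Kt. pose proof (clamp_range 0 A y ltac:(lra)).
apply RInt_ge_0; [lra|apply kt_ex_RInt; lra|intros; apply kt_nonneg; lra].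
Qed.

Lemma Kt_derive y : 0 < y < A -> continuity_pt k y -> is_derive Kt y (- kt y).
Proof.
intros Hy Hky.
apply is_derive_ext_loc with (fun z => RInt kt z A).
- apply (filter_imp (fun z => 0 < z < A)); [|apply locally_open_interval, Hy].
  intros z Hz. unfold Kt. rewrite clamp_id by lra. reflexivity.
- apply (is_derive_RInt' kt (fun z => RInt kt z A) y A).
  + apply (filter_imp (fun z => 0 < z < A)); [|apply locally_open_interval, Hy].
    intros z Hz. apply (RInt_correct (V := R_CompleteNormedModule)), kt_ex_RInt; lra.
  + apply continuity_pt_filterlim, kt_continuity_pt, Hky.
Qed.

(* [kt] is only piecewise continuous, so the fundamental theorem of calculus
   is applied piece by piece along a partition adapted to [k]. *)
Lemma RInt_Kt_by_parts (Q q : R -> R) :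
  (forall y, is_derive Q y (- q y)) -> (forall y, continuity_pt q y) ->
  RInt (fun a => Kt a * q a) 0 A = Q 0 - RInt (fun a => kt a * Q a) 0 A.
Proof.
intros HQ Hq. destruct Hk as [[p [n [Hpart Hp]]] _].
assert (HQc : forall y, continuity_pt Q y).
{ intros y. apply derivable_continuous_pt. exists (- q y). apply is_derive_Reals, HQ. }
assert (I1 : ex_RInt (fun a => Kt a * q a) 0 A).
{ apply ex_RInt_continuous_R. intros. apply continuity_pt_mult; [apply Kt_continuous|apply Hq]. }
assert (I2 : ex_RInt (fun a => kt a * Q a) 0 A)
  by (apply PC_ex_RInt, PC_mult_continuous; [apply kt_PC|exact HQc]).
assert (E : - (Kt A * Q A) - - (Kt 0 * Q 0)
             = RInt (fun a => kt a * Q a + Kt a * q a) 0 A).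
{ apply (RInt_derive_partition A p n (fun a => - (Kt a * Q a))); [exact Hpart| | |].
  - intros y. apply continuity_pt_opp, continuity_pt_mult; [apply Kt_continuous|apply HQc].
  - apply ex_RInt_plus_R; assumption.
  - intros i Hi y Hy.
    assert (Hy' : 0 < y < A).
    { pose proof (partition_range A p n Hpart i ltac:(lia)).
      pose proof (partition_range A p n Hpart (S i) ltac:(lia)). lra. }
    assert (Hky : continuity_pt k y) by (apply continuity_pt_filterlim, (proj1 (Hp i Hi)), Hy).
    split.
    + apply is_derive_Reals.
      replace (kt y * Q y + Kt y * q y) with (- (- kt y * Q y + Kt y * - q y)) by ring.
      apply derivable_pt_lim_opp, derivable_pt_lim_mult; apply is_derive_Reals;
        [apply Kt_derive; auto|apply HQ].
    + apply continuity_pt_filterlim, continuity_pt_plus.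
      * apply continuity_pt_mult; [apply kt_continuity_pt, Hky|apply HQc].
      * apply continuity_pt_mult; [apply Kt_continuous|apply Hq]. }
rewrite Kt_A, Kt_0, RInt_plus_R in E by assumption. lra.
Qed.

(* Along a characteristic, [W] is constant ([W_shift]); [phi s] is its
   value on the characteristic [t - a = s], read off where it enters the
   domain: at age [0] if [s >= 0], at time [0] otherwise. *)
Let W (a t : R) : R := x a t * exp (I a - zeta * t + RInt G 0 t).
Let phi (s : R) : R := W (clamp 0 A (- s)) (Rmax 0 s).

Lemma W_shift a t s : 0 <= a -> 0 <= t -> 0 <= s -> a + s <= A ->
  W (a + s) (t + s) = W a t.
Proof.
intros Ha Ht Hs Has. unfold W. rewrite (Hchar a t s Ha Ht Hs Has).
assert (Iz : ex_RInt (fun r => zeta + mu (a + r)) 0 s).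
{ apply (ex_RInt_translate (fun r => zeta + mu r)).
  apply (ex_RInt_subinterval _ 0 A); auto using mu_zeta_ex_RInt; lra. }
assert (IG : forall p q, ex_RInt G p q) by (intros; apply ex_RInt_continuous_R, HG).
assert (E : I (a + s) - I a + RInt G t (t + s) - zeta * s
            = RInt (fun r => mu (a + r) + u (t + r) + F (t + r)) 0 s).
{ rewrite (RInt_ext_R (fun r => mu (a + r) + u (t + r) + F (t + r))
                       (fun r => (zeta + mu (a + r)) + G (t + r) - zeta)).
  2:{ intros r Hr. rewrite Rmin_left, Rmax_right in Hr by lra. rewrite HGuF by lra. ring. }
  rewrite RInt_minus_R, RInt_plus_R, RInt_const; auto using ex_RInt_const.
  - rewrite (RInt_translate (fun r => zeta + mu r)), (RInt_translate G), <- I_minus by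
      (try apply IG; try lra; apply (ex_RInt_subinterval _ 0 A); auto using mu_zeta_ex_RInt; lra).
    change (scal (s - 0) zeta) with ((s - 0) * zeta). lra.
  - apply (ex_RInt_translate G), IG.
  - apply ex_RInt_plus_R; [exact Iz|apply (ex_RInt_translate G), IG]. }
rewrite <- E, <- (RInt_Chasles_R G 0 t (t + s)) by apply IG.
rewrite (Rmult_assoc (x a t)), <- exp_plus. do 2 f_equal. ring.
Qed.

Lemma W_eq_phi a t : 0 <= a <= A -> 0 <= t -> W a t = phi (t - a).
Proof.
intros Ha Ht. unfold phi. destruct (Rle_dec a t).
- replace (clamp 0 A (- (t - a))) with 0
    by (unfold clamp, Rmax, Rmin; repeat destruct Rle_dec; lra).
  rewrite Rmax_right by lra. rewrite <- (W_shift 0 (t - a) a) by lra. f_equal; ring.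
- rewrite clamp_id, Rmax_left by lra. rewrite <- (W_shift (- (t - a)) 0 t) by lra. f_equal; ring.
Qed.

Lemma x_boundary_continuous y : continuity_pt (fun s => x (clamp 0 A (- s)) (Rmax 0 s)) y.
Proof.
apply continuity_pt_filterlim.
apply (filterlim_comp _ _ _ (fun s => (clamp 0 A (- s), Rmax 0 s)) (fun p => x (fst p) (snd p)) _
  (within (fun p : R * R => 0 <= fst p <= A /\ 0 <= snd p) (locally (clamp 0 A (- y), Rmax 0 y)))).
- intros P [d Hd]. exists d. intros z Hz.
  apply Hd; [split|split; [apply clamp_range; lra|apply Rmax_l]].
  + change (Rabs (clamp 0 A (- z) - clamp 0 A (- y)) < d).
    eapply Rle_lt_trans; [apply clamp_lipschitz; lra|].
    replace (- z - - y) with (- (z - y)) by ring. rewrite Rabs_Ropp. exact Hz.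
  + exact (Rle_lt_trans _ _ _ (Rmax_0_lipschitz z y) Hz).
- apply Hx; [apply clamp_range; lra|apply Rmax_l].
Qed.

Lemma phi_continuous y : continuity_pt phi y.
Proof.
apply continuity_pt_mult; [apply x_boundary_continuous|].
apply (continuity_pt_comp
  (fun s => I (clamp 0 A (- s)) - zeta * Rmax 0 s + RInt G 0 (Rmax 0 s)) exp);
  [|apply derivable_continuous_pt, derivable_pt_exp].
assert (Hmax : continuity_pt (Rmax 0) y).
{ apply lipschitz_continuity_pt with 1. intros; rewrite Rmult_1_l; apply Rmax_0_lipschitz. }
apply continuity_pt_plus; [apply continuity_pt_minus|].
- apply (continuity_pt_comp (fun s => clamp 0 A (- s)) I); [|apply I_continuous].
  apply lipschitz_continuity_pt with 1. intros z w. rewrite Rmult_1_l.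
  eapply Rle_trans; [apply clamp_lipschitz; lra|].
  replace (- z - - w) with (- (z - w)) by ring. rewrite Rabs_Ropp. lra.
- apply continuity_pt_mult; [apply continuity_pt_const; intros ? ?; reflexivity|exact Hmax].
- apply (continuity_pt_comp (Rmax 0) (fun z => RInt G 0 z)); [exact Hmax|].
  apply continuity_pt_RInt_0, HG.
Qed.

Lemma phi_pos s : 0 < phi s.
Proof.
apply Rmult_lt_0_compat; [|apply exp_pos].
destruct (HxF (Rmax 0 s) (Rmax_l 0 s)) as [_ [Hpos _]].
apply Hpos, clamp_range. lra.
Qed.

Lemma phi_renewal t : 0 <= t -> phi t = RInt (fun a => kt a * phi (t - a)) 0 A.
Proof.
intros Ht. destruct (HxF t Ht) as [[Hcc _] [_ Hboundary]].
set (g := exp (- zeta * t + RInt G 0 t)).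
rewrite (RInt_ext_R _ (fun a => g * (k a * x a t))).
- rewrite RInt_scal_R, <- Hboundary by (apply PC_cont_on_cc_ex_RInt; [lra|apply Hk|exact Hcc]).
  replace t with (t - 0) at 1 by ring. rewrite <- W_eq_phi by lra.
  unfold W, g. rewrite I_0. replace (0 - zeta * t) with (- zeta * t) by ring. ring.
- intros a Ha. rewrite Rmin_left, Rmax_right in Ha by lra. rewrite <- W_eq_phi by lra.
  unfold W, kt, g.
  replace (I a - zeta * t + RInt G 0 t) with (I a + (- zeta * t + RInt G 0 t)) by ring.
  rewrite exp_plus, exp_Ropp. field. apply Rgt_not_eq, exp_pos.
Qed.

Let Psi (s : R) : R := RInt phi 0 s.
Let D (t : R) : R := Psi t - RInt (fun a => kt a * Psi (t - a)) 0 A.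
Let L (t : R) : R := RInt (fun a => Kt a * phi (t - a)) 0 A.

Lemma L_eq_D t : L t = D t.
Proof.
unfold L, D. rewrite (RInt_Kt_by_parts (fun a => Psi (t - a)) (fun a => phi (t - a))).
- rewrite Rminus_0_r. reflexivity.
- intros y. apply is_derive_Reals. replace (- phi (t - y)) with (phi (t - y) * (0 - 1)) by ring.
  apply (derivable_pt_lim_comp (fun a => t - a) Psi).
  + apply derivable_pt_lim_minus; [apply derivable_pt_lim_const|apply derivable_pt_lim_id].
  + apply is_derive_Reals, is_derive_RInt_from_0, phi_continuous.
- intros y. apply continuity_pt_reflect, phi_continuous.
Qed.

(* By [phi_renewal], [D] has zero derivative on [0, +oo). *)
Lemma L_const t : 0 <= t -> L t = L 0.
Proof.
intros Ht. rewrite !L_eq_D.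
assert (HD : forall s, derivable_pt_lim D s (phi s - RInt (fun a => kt a * phi (s - a)) 0 A)).
{ intros s. apply derivable_pt_lim_minus.
  - apply is_derive_Reals, is_derive_RInt_from_0, phi_continuous.
  - apply derivable_pt_lim_convolution; [exact HA|apply kt_PC| |exact phi_continuous].
    intros; apply kt_nonneg; lra. }
destruct (MVT_gen D 0 t (fun s => phi s - RInt (fun a => kt a * phi (s - a)) 0 A)) as [s [Hs E]].
- intros y _. apply is_derive_Reals, HD.
- intros y _. apply derivable_continuous_pt. eexists. apply HD.
- rewrite Rmin_left, Rmax_right in Hs by lra. rewrite <- phi_renewal in E by lra. lra.
Qed.

Lemma L_0_pos : 0 < L 0.
Proof.
apply RInt_gt_0_left_end; [exact HA| | |].
- intros y. apply continuity_pt_mult;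
    [apply Kt_continuous|apply continuity_pt_reflect, phi_continuous].
- intros a Ha. pose proof (Kt_nonneg a). pose proof (phi_pos (0 - a)). nra.
- rewrite Kt_0, Rminus_0_r, Rmult_1_l. apply phi_pos.
Qed.

Lemma RInt_Kt_pos : 0 < RInt Kt 0 A.
Proof.
apply RInt_gt_0_left_end; [exact HA|exact Kt_continuous|intros; apply Kt_nonneg|].
rewrite Kt_0. lra.
Qed.

Lemma x_eq_phi a t : 0 <= a <= A -> 0 <= t ->
  x a t = exp (- I a) * exp (zeta * t - RInt G 0 t) * phi (t - a).
Proof.
intros Ha Ht. rewrite <- W_eq_phi by assumption. unfold W.
rewrite <- (Rmult_1_r (x a t)) at 1. rewrite <- exp_0.
replace 0 with (- I a + (zeta * t - RInt G 0 t) + (I a - zeta * t + RInt G 0 t)) at 1 by ring.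
rewrite !exp_plus. ring.
Qed.

Lemma pi0_eq a : 0 <= a <= A -> pi0 A mu k zeta a = exp (I a) * Kt a.
Proof.
intros Ha. unfold pi0, Kt. rewrite clamp_id by exact Ha.
rewrite <- RInt_scal_R by (apply kt_ex_RInt; lra).
apply RInt_ext_R. intros s Hs. rewrite Rmin_left, Rmax_right in Hs by lra.
rewrite <- I_minus by lra. unfold kt, Rminus. rewrite exp_plus. ring.
Qed.

Lemma Pi_numerator t : 0 <= t ->
  RInt (fun a => pi0 A mu k zeta a * x a t) 0 A = exp (zeta * t - RInt G 0 t) * L t.
Proof.
intros Ht. unfold L. rewrite <- RInt_scal_R.
2:{ apply ex_RInt_continuous_R. intros. apply continuity_pt_mult;
    [apply Kt_continuous|apply continuity_pt_reflect, phi_continuous]. }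
apply RInt_ext_R. intros a Ha. rewrite Rmin_left, Rmax_right in Ha by lra.
rewrite pi0_eq, x_eq_phi, exp_Ropp by lra. field. apply Rgt_not_eq, exp_pos.
Qed.

Lemma Pi_denominator : RInt (fun a => a * k a * xstar mu zeta c a) 0 A = c * RInt Kt 0 A.
Proof.
assert (Iakt : ex_RInt (fun a => a * kt a) 0 A).
{ apply ex_RInt_ext_R with (fun a => kt a * a); [intros; ring|].
  apply PC_ex_RInt, PC_mult_continuous; [apply kt_PC|intros; apply continuity_pt_id]. }
rewrite (RInt_ext_R Kt (fun a => Kt a * 1)) by (intros; ring).
rewrite (RInt_Kt_by_parts (fun a => - a) (fun _ => 1)).
- rewrite (RInt_ext_R (fun a => kt a * - a) (fun a => -1 * (a * kt a))) by (intros; ring).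
  rewrite RInt_scal_R by exact Iakt.
  replace (c * (- 0 - -1 * RInt (fun a => a * kt a) 0 A))
    with (c * RInt (fun a => a * kt a) 0 A) by ring.
  rewrite <- RInt_scal_R by exact Iakt.
  apply RInt_ext_R. intros a Ha. rewrite Rmin_left, Rmax_right in Ha by lra.
  unfold kt, xstar, I. rewrite clamp_id by lra. ring.
- intros y. apply is_derive_Reals, (derivable_pt_lim_opp id), derivable_pt_lim_id.
- intros y. apply continuity_pt_const. intros ? ?; reflexivity.
Qed.

Lemma species_exponential_form : exists (psi : R -> R) (Lam : R), 0 < Lam /\
  (forall s, -1 < psi s) /\
  (forall t, 0 <= t ->
     Pi A mu k zeta c (fun a => x a t) = Lam * exp (zeta * t - RInt G 0 t)) /\
  (forall t a, 0 <= t -> 0 <= a <= A ->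
     x a t = xstar mu zeta c a * Pi A mu k zeta c (fun b => x b t) * (1 + psi (t - a))) /\
  (forall t, 0 <= t -> psi t = RInt (fun a => ktilde mu k zeta a * psi (t - a)) 0 A).
Proof.
pose proof RInt_Kt_pos as HM. pose proof L_0_pos as HL. set (M := RInt Kt 0 A) in *.
assert (HPi : forall t, 0 <= t ->
  Pi A mu k zeta c (fun a => x a t) = L 0 / (c * M) * exp (zeta * t - RInt G 0 t)).
{ intros t Ht. unfold Pi. rewrite Pi_numerator, Pi_denominator, L_const by exact Ht.
  fold M. field. split; lra. }
exists (fun s => M / L 0 * phi s - 1), (L 0 / (c * M)).
split; [apply Rdiv_lt_0_compat, Rmult_lt_0_compat; assumption|].
split; [|split; [exact HPi|split]].
- intros s. pose proof (phi_pos s).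
  assert (0 < M / L 0 * phi s)
    by (apply Rmult_lt_0_compat; [apply Rdiv_lt_0_compat|]; assumption).
  lra.
- intros t a Ht Ha. rewrite HPi, x_eq_phi by assumption.
  unfold xstar, I. rewrite clamp_id by exact Ha.
  field. split; lra.
- intros t Ht.
  assert (Ikphi : ex_RInt (fun a => kt a * phi (t - a)) 0 A).
  { apply PC_ex_RInt, PC_mult_continuous; [apply kt_PC|].
    intros; apply continuity_pt_reflect, phi_continuous. }
  assert (Ik : ex_RInt kt 0 A) by (apply PC_ex_RInt, kt_PC).
  rewrite (RInt_ext_R (fun a => ktilde mu k zeta a * (M / L 0 * phi (t - a) - 1))
                      (fun a => M / L 0 * (kt a * phi (t - a)) - kt a)).
  + rewrite RInt_minus_R, RInt_scal_R, kt_RInt_1, <- phi_renewal; auto using ex_RInt_scal_R.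
  + intros a Ha. rewrite Rmin_left, Rmax_right in Ha by lra. rewrite <- kt_ktilde by lra. ring.
Qed.

End Species.

Lemma Pi_ext A mu k zeta c (f g : R -> R) : 0 <= A ->
  (forall a, 0 <= a <= A -> f a = g a) -> Pi A mu k zeta c f = Pi A mu k zeta c g.
Proof.
intros HA H. unfold Pi. f_equal. apply RInt_ext_R. intros a Ha.
rewrite Rmin_left, Rmax_right in Ha by lra. rewrite H by lra. reflexivity.
Qed.

Lemma RInt_weight_factor A g (y ys psi : R -> R) e : 0 <= A -> PC A g -> cont_on_cc A y ->
  (forall a, 0 <= a <= A -> y a = ys a * exp e * (1 + psi a)) ->
  RInt (fun a => g a * y a) 0 A = exp e * RInt (fun a => g a * ys a * (1 + psi a)) 0 A.
Proof.
intros HA Hg Hy Hrep.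
assert (Iy : ex_RInt (fun a => g a * y a) 0 A) by (apply PC_cont_on_cc_ex_RInt; auto).
rewrite <- RInt_scal_R.
- apply RInt_ext_R. intros a Ha. rewrite Rmin_left, Rmax_right in Ha by lra.
  rewrite Hrep by lra. ring.
- apply ex_RInt_ext_R with (fun a => / exp e * (g a * y a)); [|apply ex_RInt_scal_R, Iy].
  intros a Ha. rewrite Rmin_left, Rmax_right in Ha by lra. rewrite Hrep by lra.
  field. apply Rgt_not_eq, exp_pos.
Qed.

Lemma Rinv_RInt_weight_factor A g (y ys psi : R -> R) e :
  0 <= A -> PC A g -> cont_on_cc A y ->
  (forall a, 0 <= a <= A -> y a = ys a * exp e * (1 + psi a)) ->
  0 < RInt (fun a => g a * y a) 0 A ->
  / RInt (fun a => g a * y a) 0 A = exp (- e) / RInt (fun a => g a * ys a * (1 + psi a)) 0 A.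
Proof.
intros HA Hg Hy Hrep Hpos.
rewrite (RInt_weight_factor A g y ys psi e HA Hg Hy Hrep) in Hpos |- *.
assert (RInt (fun a => g a * ys a * (1 + psi a)) 0 A <> 0).
{ intros E. rewrite E, Rmult_0_r in Hpos. lra. }
assert (exp e <> 0) by apply Rgt_not_eq, exp_pos.
rewrite exp_Ropp. field. split; assumption.
Qed.

Lemma species_representation (A zeta c : R) (mu k u F : R -> R) (x0 : R -> R)
  (x : R -> R -> R) :
  0 < A -> admissible A mu -> admissible A k -> is_zeta A mu k zeta -> 0 < c ->
  cont_strip A x -> (forall t, 0 <= t -> in_F A k (fun a => x a t)) ->
  (forall a, 0 <= a <= A -> x a 0 = x0 a) -> char_sol A mu u F x ->
  (forall t, 0 <= t -> filterlim u (within (fun s => 0 <= s) (locally t)) (locally (u t))) ->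
  (forall t, 0 <= t -> filterlim F (within (fun s => 0 <= s) (locally t)) (locally (F t))) ->
  let P := Pi A mu k zeta c in
  let xs := xstar mu zeta c in
  let eta := fun t => ln (P (fun a => x a t)) in
  exists psi : R -> R,
    (forall s, -1 < psi s) /\
    (forall t a, 0 <= t -> 0 <= a <= A ->
       psi (t - a) = x a t / (xs a * P (fun b => x b t)) - 1 /\
       x a t = xs a * exp (eta t) * (1 + psi (t - a))) /\
    (forall t, 0 <= t -> deriv_nonneg eta t (zeta - u t - F t)) /\
    (forall t, 0 <= t -> psi t = RInt (fun a => ktilde mu k zeta a * psi (t - a)) 0 A) /\
    eta 0 = ln (P x0) /\
    (forall a, 0 <= a <= A -> psi (- a) = x0 a / (xs a * P x0) - 1).
Proof.
intros HA Hmu Hk Hzeta Hc Hx HxF Hx0 Hchar Hu HF P xs eta.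
set (G := fun s => u (Rmax 0 s) + F (Rmax 0 s)).
assert (HG : forall y, continuity_pt G y).
{ intros y. apply continuity_pt_plus; apply (continuity_pt_comp_retraction (fun s => 0 <= s));
    auto using Rmax_l, Rmax_0_lipschitz. }
assert (HGuF : forall t, 0 <= t -> G t = u t + F t).
{ intros t Ht. unfold G. rewrite Rmax_right by exact Ht. reflexivity. }
destruct (species_exponential_form A zeta c mu k u F G x HA Hmu Hk Hzeta Hx HxF Hchar HG HGuF Hc)
  as [psi [Lam [HLam [Hpsi [HPi [Hrep Hren]]]]]].
assert (HP : forall t, 0 <= t -> 0 < P (fun a => x a t)).
{ intros t Ht. unfold P. rewrite HPi by exact Ht.
  apply Rmult_lt_0_compat; [exact HLam|apply exp_pos]. }
assert (Hxs : forall a, 0 < xs a) by (intros; apply Rmult_lt_0_compat; [exact Hc|apply exp_pos]).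
assert (Hpsi_x : forall t a, 0 <= t -> 0 <= a <= A ->
  psi (t - a) = x a t / (xs a * P (fun b => x b t)) - 1).
{ intros t a Ht Ha. unfold xs, P. rewrite (Hrep t a Ht Ha). field.
  split; apply Rgt_not_eq; [apply HP|apply Hxs]; auto. }
assert (EP0 : P (fun a => x a 0) = P x0) by (apply Pi_ext; [lra|exact Hx0]).
exists psi. split; [exact Hpsi|split; [|split; [|split; [exact Hren|split]]]].
- intros t a Ht Ha. split; [now apply Hpsi_x|].
  unfold eta. rewrite exp_ln by (apply HP, Ht). apply Hrep; assumption.
- intros t Ht. replace (zeta - u t - F t) with (zeta - G t) by (rewrite HGuF by exact Ht; ring).
  exact (deriv_nonneg_ln_exp_RInt (fun s => P (fun a => x a s)) G Lam zeta t HLam HG HPi Ht).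
- unfold eta. rewrite EP0. reflexivity.
- intros a Ha. replace (- a) with (0 - a) by ring.
  rewrite Hpsi_x, EP0, Hx0 by (auto; lra). reflexivity.
Qed.

Theorem proposition2
  (A : R) (mu1 mu2 k1 k2 g1 g2 : R -> R) (zeta1 zeta2 c1 c2 : R)
  (u : R -> R) (x10 x20 : R -> R) (x1 x2 : R -> R -> R) :
  0 < A ->
  admissible A mu1 -> admissible A mu2 ->
  admissible A k1 -> admissible A k2 ->
  admissible A g1 -> admissible A g2 ->
  is_zeta A mu1 k1 zeta1 -> is_zeta A mu2 k2 zeta2 ->
  0 < c1 -> 0 < c2 ->
  (forall t, 0 <= t ->
     filterlim u (within (fun s => 0 <= s) (locally t)) (locally (u t))) ->
  in_F A k1 x10 -> in_F A k2 x20 ->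
  is_solution A mu1 mu2 k1 k2 g1 g2 u x10 x20 x1 x2 ->
  let Pi1 := Pi A mu1 k1 zeta1 c1 in
  let Pi2 := Pi A mu2 k2 zeta2 c2 in
  let xs1 := xstar mu1 zeta1 c1 in
  let xs2 := xstar mu2 zeta2 c2 in
  let eta1 := fun t => ln (Pi1 (fun a => x1 a t)) in
  let eta2 := fun t => ln (Pi2 (fun a => x2 a t)) in
  exists psi1 psi2 : R -> R,
    (forall s, - A <= s -> -1 < psi1 s /\ -1 < psi2 s) /\
    (forall t a, 0 <= t -> 0 <= a <= A ->
       psi1 (t - a) = x1 a t / (xs1 a * Pi1 (fun b => x1 b t)) - 1 /\
       psi2 (t - a) = x2 a t / (xs2 a * Pi2 (fun b => x2 b t)) - 1) /\
    (forall t a, 0 <= t -> 0 <= a <= A ->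
       x1 a t = xs1 a * exp (eta1 t) * (1 + psi1 (t - a)) /\
       x2 a t = xs2 a * exp (eta2 t) * (1 + psi2 (t - a))) /\
    (forall t, 0 <= t ->
       deriv_nonneg eta1 t
         (zeta1 - u t - exp (eta2 t) *
            RInt (fun a => g1 a * xs2 a * (1 + psi2 (t - a))) 0 A) /\
       deriv_nonneg eta2 t
         (zeta2 - u t - exp (- eta1 t) /
            RInt (fun a => g2 a * xs1 a * (1 + psi1 (t - a))) 0 A)) /\
    (forall t, 0 <= t ->
       psi1 t = RInt (fun a => ktilde mu1 k1 zeta1 a * psi1 (t - a)) 0 A /\
       psi2 t = RInt (fun a => ktilde mu2 k2 zeta2 a * psi2 (t - a)) 0 A) /\
    eta1 0 = ln (Pi1 x10) /\ eta2 0 = ln (Pi2 x20) /\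
    (forall a, 0 <= a <= A ->
       psi1 (- a) = x10 a / (xs1 a * Pi1 x10) - 1 /\
       psi2 (- a) = x20 a / (xs2 a * Pi2 x20) - 1).
Proof.
intros HA Hmu1 Hmu2 Hk1 Hk2 [Hg1 [Hg1p _]] [Hg2 [Hg2p Hg2I]] Hz1 Hz2 Hc1 Hc2 Hu _ _
  [Hx1 [Hx2 [HF [_ [Hinit [Hch1 Hch2]]]]]] Pi1 Pi2 xs1 xs2 eta1 eta2.
assert (HF1 : forall t, 0 <= t -> in_F A k1 (fun a => x1 a t)) by apply HF.
assert (HF2 : forall t, 0 <= t -> in_F A k2 (fun a => x2 a t)) by apply HF.
set (J1 := fun t => RInt (fun a => g1 a * x2 a t) 0 A).
set (J2 := fun t => RInt (fun a => g2 a * x1 a t) 0 A).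
assert (HJ2 : forall t, 0 <= t -> 0 < J2 t)
  by (intros t Ht; apply RInt_mult_gt_0; auto; apply HF1, Ht).
assert (HJ1c : forall t, 0 <= t ->
  filterlim J1 (within (fun s => 0 <= s) (locally t)) (locally (J1 t)))
  by (intros t Ht; apply RInt_weighted_continuous_in_time; auto; [lra|apply HF2]).
assert (HJ2c : forall t, 0 <= t ->
  filterlim (fun s => / J2 s) (within (fun s => 0 <= s) (locally t)) (locally (/ J2 t))).
{ intros t Ht. apply (filterlim_comp _ _ _ J2 Rinv _ (locally (J2 t))).
  - apply RInt_weighted_continuous_in_time; auto; [lra|apply HF1].
  - apply continuous_Rinv, Rgt_not_eq, HJ2, Ht. }
destruct (species_representation A zeta1 c1 mu1 k1 u J1 x10 x1 HA Hmu1 Hk1 Hz1 Hc1 Hx1 HF1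
  (fun a Ha => proj1 (Hinit a Ha)) Hch1 Hu HJ1c)
  as [psi1 [Hpsi1 [Hrep1 [Hd1 [Hren1 [He1 Hi1]]]]]].
destruct (species_representation A zeta2 c2 mu2 k2 u (fun t => / J2 t) x20 x2 HA Hmu2 Hk2 Hz2 Hc2
  Hx2 HF2 (fun a Ha => proj2 (Hinit a Ha)) Hch2 Hu HJ2c)
  as [psi2 [Hpsi2 [Hrep2 [Hd2 [Hren2 [He2 Hi2]]]]]].
exists psi1, psi2. split; [|split; [|split; [|split; [|split; [|split; [|split]]]]]].
- intros s _. split; [apply Hpsi1|apply Hpsi2].
- intros t a Ht Ha. split; [apply Hrep1|apply Hrep2]; assumption.
- intros t a Ht Ha. split; [apply Hrep1|apply Hrep2]; assumption.
- intros t Ht. split.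
  + rewrite <- (RInt_weight_factor A g1 (fun a => x2 a t) xs2 (fun a => psi2 (t - a))
                 (eta2 t));
      [apply Hd1, Ht|lra|exact Hg1|apply HF2, Ht|intros a Ha; apply Hrep2; assumption].
  + rewrite <- (Rinv_RInt_weight_factor A g2 (fun a => x1 a t) xs1 (fun a => psi1 (t - a))
                 (eta1 t));
      [apply Hd2, Ht|lra|exact Hg2|apply HF1, Ht|intros a Ha; apply Hrep1; assumption|
       apply HJ2, Ht].
- intros t Ht. split; [apply Hren1|apply Hren2]; exact Ht.
- exact He1.
- exact He2.
- intros a Ha. split; [apply Hi1|apply Hi2]; exact Ha.
Qed.
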